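(* Let $\mathcal{C}$ be cocomplete, $J$ a set of morphisms and $\mathsf L^1$ the one-step comonad generated by $J$. For every $g\colon C\to D$, the $\mathsf L^1$-coalgebra $\overline{L^1}g$ (described below) is equal to the cofree $\mathsf L^1$-coalgebra $(\lambda^1_g,\sigma^1_g)$; that is, $\overline{L^1}=F_{\mathsf L^1}$ as functors $\mathcal{C}^{\mathbf 2}\to\mathsf L^1\text{-}\mathbf{Map}$.
   Context: $\mathcal{C}^{\mathbf 2}$ is the arrow category. For $g\colon C\to D$, $S_g$ is the set of $x=(f_x,(h_x,k_x))$ with $f_x\colon A_x\to B_x$ in $J$ and $gh_x=k_xf_x$. One-step comonad $\mathsf L^1=(E^1,\lambda^1,\rho^1,\sigma^1)$: $E^1g$ is the pushout of $\sum_xf_x\colon\sum A_x\to\sum B_x$ along $\langle h_x\rangle\colon\sum A_x\to C$, $\lambda^1_g$ the pushout injection, $\rho^1_g$ induced by $g,\langle k_x\rangle$; $E^1(h,k)$ induced by $h$ and reindexing $x\mapsto(h,k)\circ x$; writing $\iota_x\colon B_x\to E^1g$ for the coproduct injection followed by the pushout map, $\sigma^1_g\colon E^1g\to E^1(\lambda^1_g)$ is induced by $1_C$ and sending summand $x$ to summand $(f_x,(h_x,\iota_x))\in S_{\lambda^1_g}$. $\mathsf L^1$-coalgebras are $(f,s)$ with $s\colon Y\to E^1f$, $sf=\lambda^1_f$, $\rho^1_fs=1$, $\sigma^1_fs=E^1(1_X,s)s$; morphisms are squares $(h,k)$ with $tk=E^1(h,k)s$. The cofree functor $F_{\mathsf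 L^1}$ sends $g$ to $(\lambda^1_g,\sigma^1_g)$. Each $f\colon A\to B$ in $J$ carries the canonical $\mathsf L^1$-coalgebra structure $(f,\alpha_f)$ with $\alpha_f=\iota_{(f,(1_A,1_B))}$. The forgetful functor $\mathsf L^1\text{-}\mathbf{Map}\to\mathcal{C}^{\mathbf 2}$ creates colimits and (by pushout along maps of $\mathcal{C}$) cocartesian liftings for $\mathrm{dom}$; hence the coproduct $\sum_x(f_x,\alpha_{f_x})$ and its pushout along $\langle h_x\rangle$ exist in $\mathsf L^1\text{-}\mathbf{Map}$, with underlying map $\lambda^1_g$; this pushout is $\overline{L^1}g$, i.e. $\overline{L^1}g=(\lambda^1_g,t_g)$ where $t_g$ is the unique $\mathsf L^1$-coalgebra structure making $(\langle h_x\rangle,\langle\iota_x\rangle)\colon\sum_x(f_x,\alpha_{f_x})\to(\lambda^1_g,t_g)$ a cocartesian coalgebra morphism. *)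

Record Cat : Type := {
  Ob :> Type;
  Hom : Ob -> Ob -> Type;
  cmp : forall a b e : Ob, Hom b e -> Hom a b -> Hom a e;
  idm : forall a : Ob, Hom a a;
  cmpA : forall a b e d (h : Hom e d) (g : Hom b e) (f : Hom a b),
      cmp _ _ _ h (cmp _ _ _ g f) = cmp _ _ _ (cmp _ _ _ h g) f;
  cmp1l : forall a b (f : Hom a b), cmp _ _ _ (idm b) f = f;
  cmp1r : forall a b (f : Hom a b), cmp _ _ _ f (idm a) = f }.
Arguments Hom {c} _ _.
Arguments cmp {c a b e} _ _.
Arguments idm {c} a.
Arguments cmpA {c a b e d} h g f.
Arguments cmp1l {c a b} f.
Arguments cmp1r {c a b} f.
Notation "g ∘ f" := (cmp g f) (at level 40, left associativity).

Record Coprod (C : Cat) (I : Type) (A : I -> Ob C) : Type := {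
  cp_ob : Ob C;
  cp_in : forall i, Hom (A i) cp_ob;
  cp_copair : forall X, (forall i, Hom (A i) X) -> Hom cp_ob X;
  cp_beta : forall X (u : forall i, Hom (A i) X) i, cp_copair X u ∘ cp_in i = u i;
  cp_eta : forall X (u v : Hom cp_ob X),
      (forall i, u ∘ cp_in i = v ∘ cp_in i) -> u = v }.
Arguments cp_ob {C I A} c.
Arguments cp_in {C I A} c i.
Arguments cp_copair {C I A} c {X} u.
Arguments cp_beta {C I A} c {X} u i.
Arguments cp_eta {C I A} c {X} u v _.

Record Pushout (C : Cat) (A B D : Ob C) (f : Hom A B) (h : Hom A D) : Type := {
  po_ob : Ob C;
  po_l : Hom D po_ob;
  po_r : Hom B po_ob;
  po_comm : po_l ∘ h = po_r ∘ f;
  po_copair : forall X (u : Hom D X) (v : Hom B X), u ∘ h = v ∘ f -> Hom po_ob X;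
  po_beta_l : forall X u v (e : u ∘ h = v ∘ f), po_copair X u v e ∘ po_l = u;
  po_beta_r : forall X u v (e : u ∘ h = v ∘ f), po_copair X u v e ∘ po_r = v;
  po_eta : forall X (u v : Hom po_ob X),
      u ∘ po_l = v ∘ po_l -> u ∘ po_r = v ∘ po_r -> u = v }.
Arguments po_ob {C A B D f h} p.
Arguments po_l {C A B D f h} p.
Arguments po_r {C A B D f h} p.
Arguments po_comm {C A B D f h} p.
Arguments po_copair {C A B D f h} p {X u v} e.
Arguments po_beta_l {C A B D f h} p {X u v} e.
Arguments po_beta_r {C A B D f h} p {X u v} e.
Arguments po_eta {C A B D f h} p {X} u v _ _.

(** A cocomplete category, presented (equivalently) as a category with
    all small coproducts and all pushouts (chosen). *)
Record CocompleteCat : Type := {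
  cat :> Cat;
  coprod : forall (I : Type) (A : I -> Ob cat), Coprod cat I A;
  pushout : forall (A B D : Ob cat) (f : Hom A B) (h : Hom A D), Pushout cat A B D f h }.

Record Arr (C : Cat) : Type := mkArr { adom : Ob C; acod : Ob C; amap : Hom adom acod }.
Arguments mkArr {C adom acod} amap.
Arguments adom {C} a.
Arguments acod {C} a.
Arguments amap {C} a.

Section OneStep.
Variable C : CocompleteCat.
(** J is given as a family of morphisms (injectivity is assumed where needed). *)
Variable JI : Type.
Variable Jf : JI -> Arr C.

Record Sx (g : Arr C) : Type := mkSx {
  sx_j : JI;
  sx_h : Hom (adom (Jf sx_j)) (adom g);
  sx_k : Hom (acod (Jf sx_j)) (acod g);
  sx_comm : amap g ∘ sx_h = sx_k ∘ amap (Jf sx_j) }.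
Arguments mkSx {g} sx_j sx_h sx_k sx_comm.
Arguments sx_j {g} s.
Arguments sx_h {g} s.
Arguments sx_k {g} s.

Definition SA (g : Arr C) := @coprod C _ (fun x : Sx g => adom (Jf (sx_j x))).
Definition SB (g : Arr C) := @coprod C _ (fun x : Sx g => acod (Jf (sx_j x))).
Definition Sf (g : Arr C) : Hom (cp_ob (SA g)) (cp_ob (SB g)) :=
  cp_copair (SA g) (fun x => cp_in (SB g) x ∘ amap (Jf (sx_j x))).
Definition Sh (g : Arr C) : Hom (cp_ob (SA g)) (adom g) :=
  cp_copair (SA g) (fun x => sx_h x).
Definition Sk (g : Arr C) : Hom (cp_ob (SB g)) (acod g) :=
  cp_copair (SB g) (fun x => sx_k x).
Lemma SA_beta (g : Arr C) X (u : forall x : Sx g, Hom (adom (Jf (sx_j x))) X) (x : Sx g) :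
  cp_copair (SA g) u ∘ cp_in (SA g) x = u x.
Proof. exact (cp_beta (SA g) u x). Qed.
Lemma SB_beta (g : Arr C) X (u : forall x : Sx g, Hom (acod (Jf (sx_j x))) X) (x : Sx g) :
  cp_copair (SB g) u ∘ cp_in (SB g) x = u x.
Proof. exact (cp_beta (SB g) u x). Qed.

Definition PO (g : Arr C) := @pushout C _ _ _ (Sf g) (Sh g).

Definition E1 (g : Arr C) : Ob C := po_ob (PO g).
Definition lam (g : Arr C) : Hom (adom g) (E1 g) := po_l (PO g).
Definition iota (g : Arr C) (x : Sx g) : Hom (acod (Jf (sx_j x))) (E1 g) :=
  po_r (PO g) ∘ cp_in (SB g) x.
Definition L1 (g : Arr C) : Arr C := mkArr (lam g).

Lemma iota_sq (g : Arr C) (x : Sx g) :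
  lam g ∘ sx_h x = iota g x ∘ amap (Jf (sx_j x)).
Proof.
  unfold lam, iota, E1.
  rewrite <- (cp_beta (SA g) (fun x => sx_h x) x).
  change (cp_copair (SA g) (fun x => sx_h x)) with (Sh g).
  rewrite cmpA, (po_comm (PO g)), <- cmpA. unfold Sf. rewrite SA_beta.
  apply cmpA.
Qed.

Lemma rho_comp (g : Arr C) : amap g ∘ Sh g = Sk g ∘ Sf g.
Proof.
  apply (cp_eta (SA g)); intro x.
  unfold Sh, Sf, Sk. rewrite <- !cmpA, !SA_beta, cmpA, SB_beta.
  apply sx_comm.
Qed.
Definition rho (g : Arr C) : Hom (E1 g) (acod g) := po_copair (PO g) (rho_comp g).

Section E1map.
Variables (g g' : Arr C) (h : Hom (adom g) (adom g')) (k : Hom (acod g) (acod g'))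
  (H : amap g' ∘ h = k ∘ amap g).

Lemma sq_push (x : Sx g) :
  amap g' ∘ (h ∘ sx_h x) = (k ∘ sx_k x) ∘ amap (Jf (sx_j x)).
Proof. rewrite cmpA, H, <- cmpA, sx_comm. apply cmpA. Qed.

Definition sx_push (x : Sx g) : Sx g' := mkSx (sx_j x) (h ∘ sx_h x) (k ∘ sx_k x) (sq_push x).

Lemma E1map_comp :
  (lam g' ∘ h) ∘ Sh g = cp_copair (SB g) (fun x => iota g' (sx_push x)) ∘ Sf g.
Proof.
  apply (cp_eta (SA g)); intro x.
  unfold Sh, Sf. rewrite <- !cmpA, !SA_beta.
  rewrite (cmpA (cp_copair (SB g) _)), SB_beta.
  exact (iota_sq _ (sx_push x)).
Qed.

Definition E1map : Hom (E1 g) (E1 g') := po_copair (PO g) E1map_comp.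
End E1map.
Arguments E1map {g g' h k} H.

Definition sx_lift (g : Arr C) (x : Sx g) : Sx (L1 g) :=
  mkSx (g := L1 g) (sx_j x) (sx_h x) (iota g x) (iota_sq g x).

Lemma sigma_comp (g : Arr C) :
  lam (L1 g) ∘ Sh g = cp_copair (SB g) (fun x => iota (L1 g) (sx_lift g x)) ∘ Sf g.
Proof.
  apply (cp_eta (SA g)); intro x.
  unfold Sh, Sf. rewrite <- !cmpA, !SA_beta.
  rewrite (cmpA (cp_copair (SB g) _)), SB_beta.
  exact (iota_sq _ (sx_lift g x)).
Qed.

Definition sigma1 (g : Arr C) : Hom (E1 g) (E1 (L1 g)) :=
  po_copair (PO g) (sigma_comp g).

Definition is_coalg (f : Arr C) (s : Hom (acod f) (E1 f)) : Prop :=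
  exists H : amap (L1 f) ∘ idm (adom f) = s ∘ amap f,
    s ∘ amap f = lam f /\ rho f ∘ s = idm (acod f) /\
    sigma1 f ∘ s = @E1map f (L1 f) (idm (adom f)) s H ∘ s.

Definition is_coalg_mor {f : Arr C} (s : Hom (acod f) (E1 f))
    {g : Arr C} (t : Hom (acod g) (E1 g))
    (u : Hom (adom f) (adom g)) (v : Hom (acod f) (acod g)) : Prop :=
  exists H : amap g ∘ u = v ∘ amap f, t ∘ v = E1map H ∘ s.

(** Cocartesian coalgebra morphisms for dom : L^1-Map -> C *)
Definition is_cocart {f : Arr C} (s : Hom (acod f) (E1 f))
    {g : Arr C} (t : Hom (acod g) (E1 g))
    (u : Hom (adom f) (adom g)) (v : Hom (acod f) (acod g)) : Prop :=
  forall (g' : Arr C) (t' : Hom (acod g') (E1 g')), is_coalg g' t' ->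
  forall (u' : Hom (adom f) (adom g')) (v' : Hom (acod f) (acod g')),
    is_coalg_mor s t' u' v' ->
  forall w : Hom (adom g) (adom g'), w ∘ u = u' ->
    exists! z : Hom (acod g) (acod g'), is_coalg_mor t t' w z /\ z ∘ v = v'.

Lemma id_sq (j : JI) : amap (Jf j) ∘ idm _ = idm _ ∘ amap (Jf j).
Proof. rewrite cmp1r, cmp1l. reflexivity. Qed.
Definition alpha (j : JI) : Hom (acod (Jf j)) (E1 (Jf j)) :=
  iota (Jf j) (mkSx (g := Jf j) j (idm _) (idm _) (id_sq j)).

(** The coproduct coalgebra sum_x (f_x, alpha_{f_x}), underlying arrow Sf g *)
Definition SArr (g : Arr C) : Arr C := mkArr (Sf g).
Lemma in_sq (g : Arr C) (x : Sx g) :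
  amap (SArr g) ∘ cp_in (SA g) x = cp_in (SB g) x ∘ amap (Jf (sx_j x)).
Proof. exact (SA_beta g _ (fun x => cp_in (SB g) x ∘ amap (Jf (sx_j x))) x). Qed.
Definition sstr (g : Arr C) : Hom (acod (SArr g)) (E1 (SArr g)) :=
  cp_copair (SB g) (fun x => E1map (in_sq g x) ∘ alpha (sx_j x)).

Definition iota_copair (g : Arr C) : Hom (acod (SArr g)) (acod (L1 g)) :=
  cp_copair (SB g) (fun x => iota g x).

(** t is the structure of \overline{L^1} g: the (unique) coalgebra structure on
    lambda^1_g making (<h_x>, <iota_x>) a cocartesian coalgebra morphism. *)
Definition Lbar_str_spec (g : Arr C) (t : Hom (acod (L1 g)) (E1 (L1 g))) : Prop :=
  is_coalg (L1 g) t /\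
  is_coalg_mor (sstr g) t (Sh g) (iota_copair g) /\
  is_cocart (sstr g) t (Sh g) (iota_copair g).

End OneStep.
Arguments E1 {C JI} Jf g.
Arguments L1 {C JI} Jf g.
Arguments sigma1 {C JI} Jf g.
Arguments Lbar_str_spec {C JI} Jf g t.

(* Every map out of E^1 g is determined by its composites with lambda^1_g and
   the iota_x, and sigma^1_g sends iota_x to iota_{(f_x,(h_x,iota_x))}, which is
   exactly where the coproduct coalgebra sends the summand x.  So sigma^1_g
   makes (<h_x>, <iota_x>) a coalgebra morphism, and the counit law together
   with this morphism condition leaves no freedom for a structure on lambda^1_g.
   Cocartesianness holds because a map out of E^1 g is a map out of a pushout:
   the required square is forced on the lambda-leg and on the iota-leg it is
   the given coalgebra morphism out of the coproduct. *)

From Pilot Require Import Defs.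
From Stdlib Require Import ProofIrrelevance.

Section CofreeCoalgebra.
Variables (C : CocompleteCat) (JI : Type) (Jf : JI -> Arr C).

Local Notation mkSx := (Defs.mkSx C JI Jf).
Local Notation sx_j := (Defs.sx_j C JI Jf).
Local Notation sx_k := (Defs.sx_k C JI Jf).
Local Notation SA := (Defs.SA C JI Jf).
Local Notation SB := (Defs.SB C JI Jf).
Local Notation Sf := (Defs.Sf C JI Jf).
Local Notation Sh := (Defs.Sh C JI Jf).
Local Notation PO := (Defs.PO C JI Jf).
Local Notation lam := (Defs.lam C JI Jf).
Local Notation iota := (Defs.iota C JI Jf).
Local Notation rho := (Defs.rho C JI Jf).
Local Notation E1map := (Defs.E1map C JI Jf).
Local Notation sx_lift := (Defs.sx_lift C JI Jf).
Local Notation SArr := (Defs.SArr C JI Jf).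
Local Notation sstr := (Defs.sstr C JI Jf).
Local Notation iota_copair := (Defs.iota_copair C JI Jf).
Local Notation is_coalg := (Defs.is_coalg C JI Jf).
Local Notation is_coalg_mor f s g t := (@Defs.is_coalg_mor C JI Jf f s g t).
Local Notation is_cocart f s g t := (@Defs.is_cocart C JI Jf f s g t).

Lemma E1_hom_ext (g : Arr C) X (u v : Hom (E1 Jf g) X) :
  u ∘ lam g = v ∘ lam g -> (forall x, u ∘ iota g x = v ∘ iota g x) -> u = v.
Proof.
  intros Hlam Hiota. apply (po_eta (PO g)); [exact Hlam |].
  apply (cp_eta (SB g)); intro x. rewrite <- !cmpA. apply Hiota.
Qed.

Lemma iota_copair_po_r (g : Arr C) : iota_copair g = po_r (PO g).
Proof. apply (cp_eta (SB g)); intro x. exact (cp_beta (SB g) _ x). Qed.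

Lemma iota_mkSx_ext (g : Arr C) j h h' k k' p p' :
  h = h' -> k = k' -> iota g (mkSx g j h k p) = iota g (mkSx g j h' k' p').
Proof. intros -> ->. rewrite (proof_irrelevance _ p p'). reflexivity. Qed.

Lemma E1map_irrelevance (g g' : Arr C) h k (H H' : amap g' ∘ h = k ∘ amap g) :
  E1map g g' h k H = E1map g g' h k H'.
Proof. rewrite (proof_irrelevance _ H H'). reflexivity. Qed.

Lemma rho_lam (g : Arr C) : rho g ∘ lam g = amap g.
Proof. apply po_beta_l. Qed.

Lemma rho_iota (g : Arr C) x : rho g ∘ iota g x = sx_k g x.
Proof.
  unfold iota at 1. rewrite cmpA. unfold rho. rewrite (po_beta_r (PO g)).
  exact (cp_beta (SB g) _ x).
Qed.

Lemma E1map_lam (g g' : Arr C) h k H : E1map g g' h k H ∘ lam g = lam g' ∘ h.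
Proof. apply po_beta_l. Qed.

Lemma E1map_iota (g g' : Arr C) h k H x :
  E1map g g' h k H ∘ iota g x = iota g' (sx_push C JI Jf g g' h k H x).
Proof.
  unfold iota at 1. rewrite cmpA. unfold E1map. rewrite (po_beta_r (PO g)).
  exact (cp_beta (SB g) _ x).
Qed.

(* The explicit domain [acod (Jf j)] lets this rewrite composites whose domain
   is only convertible to it, which [E1map_iota] cannot match. *)
Lemma E1map_iota_mkSx (g g' : Arr C) h k H j h0 k0 p0 :
  @cmp C (acod (Jf j)) _ _ (E1map g g' h k H) (iota g (mkSx g j h0 k0 p0))
  = iota g' (mkSx g' j (h ∘ h0) (k ∘ k0)
               (sq_push C JI Jf g g' h k H (mkSx g j h0 k0 p0))).
Proof. exact (E1map_iota g g' h k H (mkSx g j h0 k0 p0)). Qed.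

Lemma sigma1_lam (g : Arr C) : sigma1 Jf g ∘ lam g = lam (L1 Jf g).
Proof. apply po_beta_l. Qed.

Lemma sigma1_iota (g : Arr C) x :
  sigma1 Jf g ∘ iota g x = iota (L1 Jf g) (sx_lift g x).
Proof.
  unfold iota at 1. rewrite cmpA. unfold sigma1. rewrite (po_beta_r (PO g)).
  exact (cp_beta (SB g) _ x).
Qed.

(* The summand x of the coproduct coalgebra is alpha_{f_x} = iota_{(f_x,(1,1))},
   so pushing it along a square (u, v) only records the composite square. *)
Lemma E1map_sstr_in (g g' : Arr C) u v H x U V p :
  U = u ∘ cp_in (SA g) x -> V = v ∘ cp_in (SB g) x ->
  (E1map (SArr g) g' u v H ∘ sstr g) ∘ cp_in (SB g) x
  = iota g' (mkSx g' (sx_j g x) U V p).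
Proof.
  intros HU HV. unfold sstr. rewrite <- cmpA, (cp_beta (SB g)).
  unfold alpha. rewrite !E1map_iota_mkSx.
  apply iota_mkSx_ext; rewrite ?cmp1r; symmetry; assumption.
Qed.

Lemma sigma1_is_coalg (g : Arr C) : is_coalg (L1 Jf g) (sigma1 Jf g).
Proof.
  assert (H : amap (L1 Jf (L1 Jf g)) ∘ idm (adom (L1 Jf g))
              = sigma1 Jf g ∘ amap (L1 Jf g)).
  { rewrite cmp1r. symmetry. exact (sigma1_lam g). }
  exists H. split; [| split].
  - exact (sigma1_lam g).
  - apply E1_hom_ext.
    + rewrite <- cmpA, sigma1_lam, cmp1l. exact (rho_lam (L1 Jf g)).
    + intro x. rewrite <- cmpA, sigma1_iota, cmp1l. exact (rho_iota (L1 Jf g) (sx_lift g x)).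
  - apply E1_hom_ext.
    + rewrite <- !cmpA, sigma1_lam.
      etransitivity; [exact (sigma1_lam (L1 Jf g)) |].
      symmetry. etransitivity; [exact (E1map_lam _ _ _ _ H) |]. apply cmp1r.
    + intro x. rewrite <- !cmpA, sigma1_iota.
      etransitivity; [exact (sigma1_iota (L1 Jf g) (sx_lift g x)) |].
      symmetry. etransitivity; [exact (E1map_iota _ _ _ _ H (sx_lift g x)) |].
      apply iota_mkSx_ext; cbn.
      * apply cmp1l.
      * apply sigma1_iota.
Qed.

Lemma sigma1_coalg_mor (g : Arr C) :
  is_coalg_mor (SArr g) (sstr g) (L1 Jf g) (sigma1 Jf g) (Sh g) (iota_copair g).
Proof.
  assert (H : amap (L1 Jf g) ∘ Sh g = iota_copair g ∘ amap (SArr g)).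
  { rewrite iota_copair_po_r. exact (po_comm (PO g)). }
  exists H. apply (cp_eta (SB g)); intro x.
  rewrite <- cmpA. unfold iota_copair at 1. rewrite (cp_beta (SB g)), sigma1_iota.
  symmetry. apply E1map_sstr_in; symmetry; exact (cp_beta _ _ x).
Qed.

Lemma coalg_str_L1_unique (g : Arr C) (t t' : Hom (acod (L1 Jf g)) (E1 Jf (L1 Jf g))) :
  is_coalg (L1 Jf g) t -> is_coalg (L1 Jf g) t' ->
  is_coalg_mor (SArr g) (sstr g) (L1 Jf g) t (Sh g) (iota_copair g) ->
  is_coalg_mor (SArr g) (sstr g) (L1 Jf g) t' (Sh g) (iota_copair g) -> t = t'.
Proof.
  intros [_ [Ht _]] [_ [Ht' _]] [H Hm] [H' Hm'].
  apply (po_eta (PO g)).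
  - change (t ∘ amap (L1 Jf g) = t' ∘ amap (L1 Jf g)). rewrite Ht, Ht'. reflexivity.
  - rewrite <- iota_copair_po_r.
    etransitivity; [exact Hm |]. etransitivity; [| symmetry; exact Hm'].
    rewrite (E1map_irrelevance _ _ _ _ H H'). reflexivity.
Qed.

Section Cocartesian.
Variables (g g' : Arr C) (t' : Hom (acod g') (E1 Jf g'))
  (u' : Hom (adom (SArr g)) (adom g')) (v' : Hom (acod (SArr g)) (acod g'))
  (w : Hom (adom g) (adom g')) (z : Hom (E1 Jf g) (acod g')).
Hypotheses (Ht'_counit : t' ∘ amap g' = lam g')
  (Hmor : is_coalg_mor (SArr g) (sstr g) g' t' u' v') (Hw : w ∘ Sh g = u').
Hypotheses (Hz_lam : z ∘ lam g = amap g' ∘ w) (Hz_po_r : z ∘ po_r (PO g) = v').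

Lemma po_copair_coalg_mor : is_coalg_mor (L1 Jf g) (sigma1 Jf g) g' t' w z.
Proof.
  destruct Hmor as [H' Hm].
  assert (Hs : amap g' ∘ w = z ∘ amap (L1 Jf g)) by (symmetry; exact Hz_lam).
  exists Hs. apply E1_hom_ext.
  - rewrite <- !cmpA, Hz_lam, sigma1_lam.
    symmetry. etransitivity; [exact (E1map_lam (L1 Jf g) g' w z Hs) |].
    rewrite cmpA, Ht'_counit. reflexivity.
  - intro x.
    transitivity ((t' ∘ v') ∘ cp_in (SB g) x).
    { rewrite <- !cmpA. f_equal. unfold iota. rewrite cmpA, Hz_po_r. reflexivity. }
    rewrite Hm.
    transitivity (E1map (L1 Jf g) g' w z Hs ∘ iota (L1 Jf g) (sx_lift g x));
      [| rewrite <- cmpA, sigma1_iota; reflexivity].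
    etransitivity; [| symmetry; exact (E1map_iota (L1 Jf g) g' w z Hs (sx_lift g x))].
    unfold sx_push, Defs.sx_lift. apply (E1map_sstr_in g g' u' v' H' x); cbn.
    + rewrite <- Hw, <- cmpA. f_equal. symmetry. exact (cp_beta _ _ x).
    + rewrite <- Hz_po_r. unfold iota. apply cmpA.
Qed.

End Cocartesian.

Lemma sigma1_cocart (g : Arr C) :
  is_cocart (SArr g) (sstr g) (L1 Jf g) (sigma1 Jf g) (Sh g) (iota_copair g).
Proof.
  intros g' t' [_ [Ht'_counit _]] u' v' Hmor w Hw.
  assert (e : (amap g' ∘ w) ∘ Sh g = v' ∘ Sf g).
  { destruct Hmor as [H' _]. rewrite <- cmpA. etransitivity; [| exact H'].
    f_equal. exact Hw. }
  exists (po_copair (PO g) e). split.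
  - split.
    + apply (po_copair_coalg_mor g g' t' u' v');
        [exact Ht'_counit | exact Hmor | exact Hw | apply po_beta_l | apply po_beta_r].
    + rewrite iota_copair_po_r. apply po_beta_r.
  - intros z' [[Hs' _] Hz']. apply (po_eta (PO g)).
    + change (po_copair (PO g) e ∘ lam g = z' ∘ lam g).
      rewrite (po_beta_l (PO g)). exact Hs'.
    + rewrite (po_beta_r (PO g)), <- Hz', iota_copair_po_r. reflexivity.
Qed.

End CofreeCoalgebra.

Theorem proposition6p10 (C : CocompleteCat) (JI : Type) (Jf : JI -> Arr C)
  (Jset : forall i j : JI, Jf i = Jf j -> i = j)
  (g : Arr C) (t : Hom (acod (L1 Jf g)) (E1 Jf (L1 Jf g))) :
  Lbar_str_spec Jf g t <-> t = sigma1 Jf g.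
Proof.
  split.
  - intros [Ht [Hmor _]].
    apply (coalg_str_L1_unique C JI Jf g); trivial.
    + apply sigma1_is_coalg.
    + apply sigma1_coalg_mor.
  - intros ->. split; [| split].
    + apply sigma1_is_coalg.
    + apply sigma1_coalg_mor.
    + apply sigma1_cocart.
Qed.
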